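(* Let $f$ be a piecewise smooth function with rational discontinuities at $0\le x_1<\dots<x_\nu<1$; put $x_0=0$, $A_i=\lim_{\delta\to0}[f(x_i-\delta)-f(x_i+\delta)]$, $c_i=\sum_{j=1}^iA_j$, and $g(x)=(\{x\}-\tfrac12)\sum_{i=1}^\nu A_i+\sum_{i=1}^\nu c_i(\mathbb{1}_{[x_{i-1},x_i)}(\{x\})-(x_i-x_{i-1}))$. Assume $\sum_{i=1}^\nu A_i\ne0$ or $\sum_{i=1}^\nu c_i(x_i-x_{i-1})\ne0$. Then there exist constants $c,c'>0$ and integers $\mu_j,\beta_j,\gamma_j,\delta_j$ ($j=1,2$), depending on $f$, and a constant $D>0$ such that for every irrational $\alpha=[0;a_1,a_2,\dots]$ the following holds for all sufficiently large $K$ with $a_K$ sufficiently large: (1) if $K\equiv\mu_1\pmod{\beta_1}$ and $q_{K-1}\equiv\gamma_1\pmod{\delta_1}$, then for every integer $0\le b\le ca_K$, $S_{bq_{K-1}}(g,\alpha)\ge bc'-D\sum_{i=1}^{K-1}a_i$; (2) if $K\equiv\mu_2\pmod{\beta_2}$ and $q_{K-1}\equiv\gamma_2\pmod{\delta_2}$, then for every integer $0\le b\le ca_K$, $S_{bq_{K-1}}(g,\alpha)\le -bc'+D\sum_{i=1}^{K-1}a_i$.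
   Context: $\{x\}$ is the fractional part; $q_k$ are the convergent denominators of $\alpha$ ($q_0=1,q_1=a_1,q_{k+1}=a_{k+1}q_k+q_{k-1}$). $S_N(g,\alpha):=\sum_{n=1}^N g(n\alpha)-N\int_0^1 g$. A $1$-periodic $f$ is a piecewise smooth function with rational discontinuities if there exist $\nu\ge1$ and rationals $0\le x_1<\dots<x_\nu<1$ such that $f$ is differentiable on $[0,1)\setminus\{x_1,\dots,x_\nu\}$, the restriction of $f'$ to $[0,1)$ extends to a function of bounded variation on $[0,1)$, and $\lim_{\delta\to0}[f(x_i-\delta)-f(x_i+\delta)]\ne0$ for some $i$. *)

From Stdlib Require Import Reals ZArith Lra.
From Coquelicot Require Import Coquelicot.
Open Scope R_scope.

Fixpoint sum1 (F : nat -> R) (n : nat) : R :=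
  match n with
  | O => 0
  | S m => sum1 F m + F (S m)
  end.

Definition frac (x : R) : R := frac_part x.

Definition is_rational (x : R) : Prop :=
  exists p q : Z, q <> 0%Z /\ x = IZR p / IZR q.

Definition ind_Ico (a b y : R) : R :=
  if Rle_dec a y then (if Rlt_dec y b then 1 else 0) else 0.

Definition bounded_variation_01 (h : R -> R) : Prop :=
  exists M : R, forall (n : nat) (t : nat -> R),
    (forall k, (k <= n)%nat -> 0 <= t k < 1) ->
    (forall k, (k < n)%nat -> t k <= t (S k)) ->
    sum1 (fun k => Rabs (h (t k) - h (t (k - 1)%nat))) n <= M.

Definition piecewise_smooth_rational (f : R -> R) (nu : nat) (x : nat -> R)
  : Prop :=
  (forall y, f (y + 1) = f y) /\
  (1 <= nu)%nat /\
  (forall i, (1 <= i <= nu)%nat -> is_rational (x i)) /\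
  0 <= x 1%nat /\ x nu < 1 /\
  (forall i, (1 <= i < nu)%nat -> x i < x (S i)) /\
  (forall y, 0 <= y < 1 -> (forall i, (1 <= i <= nu)%nat -> y <> x i) ->
     ex_derive f y) /\
  (exists h : R -> R, bounded_variation_01 h /\
     forall y, 0 <= y < 1 -> (forall i, (1 <= i <= nu)%nat -> y <> x i) ->
       is_derive f y (h y)).

Definition jumps (f : R -> R) (nu : nat) (x : nat -> R) (A : nat -> R) : Prop :=
  forall i, (1 <= i <= nu)%nat ->
    filterlim (fun d => f (x i - d) - f (x i + d)) (at_right 0) (locally (A i)).

Definition xx (x : nat -> R) (i : nat) : R :=
  match i with O => 0 | _ => x i end.

Definition cc (A : nat -> R) (i : nat) : R := sum1 A i.

Definition gfun (nu : nat) (x A : nat -> R) (y : R) : R :=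
  (frac y - 1/2) * sum1 A nu +
  sum1 (fun i => cc A i * (ind_Ico (xx x (i - 1)) (xx x i) (frac y)
                             - (xx x i - xx x (i - 1)))) nu.

Definition SN (g : R -> R) (alpha : R) (N : nat) : R :=
  sum1 (fun n => g (INR n * alpha)) N - INR N * RInt g 0 1.

(* continued fraction expansion alpha = [0; a_1, a_2, ...] via the Gauss map *)
Fixpoint cf_rem (alpha : R) (k : nat) : R :=
  match k with
  | O => alpha
  | S m => frac (1 / cf_rem alpha m)
  end.

(* partial quotient a_k, k >= 1 *)
Definition cf_a (alpha : R) (k : nat) : Z :=
  Int_part (1 / cf_rem alpha (k - 1)).

(* (q_k, q_{k-1}) with q_0 = 1, q_{-1} = 0, q_{k+1} = a_{k+1} q_k + q_{k-1} *)
Fixpoint cf_qpair (alpha : R) (k : nat) : Z * Z :=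
  match k with
  | O => (1%Z, 0%Z)
  | S m => let (qm, qm1) := cf_qpair alpha m in
           (cf_a alpha (S m) * qm + qm1, qm)%Z
  end.

Definition cf_q (alpha : R) (k : nat) : Z := fst (cf_qpair alpha k).

(* Let p/q = p_k/q_k be a convergent of alpha and write q alpha = p + e, so that
   |e| q a_(k+1) < 1 and e has the sign of (-1)^k.  Modulo 1, n alpha = j_n/q + n e/q
   with j_n = n p mod q; as p and q are coprime, j_n runs b times through all residues
   mod q when 1 <= n <= b q.  All discontinuities of g lie on a grid (1/L)Z, and for
   b <= c a_(k+1) the shifts n e/q stay below 1/(qL): no point n alpha crosses a
   discontinuity, so g(n alpha) is the one-sided limit of g at j_n/q plus the linear
   part (sum A_i) n e/q.  Hence S_(bq)(g, alpha) = b V + O(b / a_(k+1)), where V is the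
   sum over j of the right (k even) or left (k odd) limits of g at j/q.  Counting grid
   points gives V = tau_s := - sum A_i / 2 + s sum c_i (x_i - x_(i-1)) if k is even and
   q = -s mod L, and V = - tau_s if k is odd and q = s mod L (s in {0, 1}).  The
   nondegeneracy hypothesis provides s with tau_s <> 0, and the sign of tau_s decides
   which of the two patterns gives the lower and which the upper bound. *)

From Stdlib Require Import Reals ZArith Lra Lia Permutation List.
From Coquelicot Require Import Coquelicot.
Open Scope R_scope.

Lemma Int_part_unique (y : R) (k : Z) : IZR k <= y < IZR k + 1 -> Int_part y = k.
Proof.
  intros [Hlo Hhi]. unfold Int_part.
  rewrite <- (tech_up y (k + 1)); rewrite ?plus_IZR; lra || lia.
Qed.

Lemma frac_unique (y : R) (k : Z) : IZR k <= y < IZR k + 1 -> frac y = y - IZR k.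
Proof. intros Hk. unfold frac, frac_part. now rewrite (Int_part_unique y k Hk). Qed.

Lemma frac_add_IZR (y : R) (k : Z) : frac (y + IZR k) = frac y.
Proof.
  destruct (base_Int_part y) as [Hlo Hhi].
  rewrite (frac_unique y (Int_part y)) by lra.
  rewrite (frac_unique (y + IZR k) (Int_part y + k)) by (rewrite plus_IZR; lra).
  rewrite plus_IZR; ring.
Qed.

Lemma frac_small (y : R) : 0 <= y < 1 -> frac y = y.
Proof. intros Hy. rewrite (frac_unique y 0) by (simpl; lra). simpl; ring. Qed.

Lemma sum1_ext (F G : nat -> R) (n : nat) :
  (forall i, (1 <= i <= n)%nat -> F i = G i) -> sum1 F n = sum1 G n.
Proof.
  induction n as [|n IH]; intros H; simpl; [reflexivity|].
  rewrite IH by (intros; apply H; lia). rewrite H by lia. reflexivity.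
Qed.

Lemma sum1_plus (F G : nat -> R) (n : nat) :
  sum1 (fun i => F i + G i) n = sum1 F n + sum1 G n.
Proof. induction n; simpl; [ring | rewrite IHn; ring]. Qed.

Lemma sum1_scal (c : R) (F : nat -> R) (n : nat) :
  sum1 (fun i => c * F i) n = c * sum1 F n.
Proof. induction n; simpl; [ring | rewrite IHn; ring]. Qed.

Lemma sum1_const (c : R) (n : nat) : sum1 (fun _ => c) n = INR n * c.
Proof. induction n; simpl sum1; [simpl; ring | rewrite IHn, S_INR; ring]. Qed.

Lemma sum1_add_range (F : nat -> R) (m n : nat) :
  sum1 F (m + n) = sum1 F m + sum1 (fun i => F (m + i)%nat) n.
Proof.
  induction n; simpl; [rewrite Nat.add_0_r; ring|].
  rewrite Nat.add_succ_r. simpl. rewrite IHn. ring.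
Qed.

Lemma sum1_INR (n : nat) : sum1 INR n = INR n * (INR n + 1) / 2.
Proof.
  induction n; [simpl; field|].
  change (sum1 INR (S n)) with (sum1 INR n + INR (S n)). rewrite IHn, S_INR. field.
Qed.

Lemma sum1_nonneg (F : nat -> R) (n : nat) :
  (forall i, (1 <= i <= n)%nat -> 0 <= F i) -> 0 <= sum1 F n.
Proof.
  induction n; intros H; simpl; [lra|].
  assert (0 <= sum1 F n) by (apply IHn; intros; apply H; lia).
  assert (0 <= F (S n)) by (apply H; lia). lra.
Qed.

Fixpoint sum_list (F : nat -> R) (l : list nat) : R :=
  match l with nil => 0 | i :: l => F i + sum_list F l end.

Lemma sum_list_app (F : nat -> R) (l1 l2 : list nat) :
  sum_list F (l1 ++ l2) = sum_list F l1 + sum_list F l2.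
Proof. induction l1; simpl; [ring | rewrite IHl1; ring]. Qed.

Lemma sum_list_perm (F : nat -> R) (l1 l2 : list nat) :
  Permutation l1 l2 -> sum_list F l1 = sum_list F l2.
Proof. induction 1; simpl; try ring; congruence. Qed.

Lemma sum_list_map (F : nat -> R) (f : nat -> nat) (l : list nat) :
  sum_list F (map f l) = sum_list (fun i => F (f i)) l.
Proof. induction l; simpl; congruence. Qed.

Lemma sum1_sum_list (F : nat -> R) (n : nat) : sum1 F n = sum_list F (seq 1 n).
Proof. induction n; [reflexivity|]. rewrite seq_S, sum_list_app; simpl. rewrite IHn. ring. Qed.

Definition sum0 (F : nat -> R) (n : nat) : R := sum_list F (seq 0 n).

Lemma sum0_S (F : nat -> R) (n : nat) : sum0 F (S n) = sum0 F n + F n.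
Proof. unfold sum0. rewrite seq_S, sum_list_app; simpl. ring. Qed.

Lemma sum0_ext (F G : nat -> R) (n : nat) :
  (forall j, (j < n)%nat -> F j = G j) -> sum0 F n = sum0 G n.
Proof.
  induction n; intros H; [reflexivity|].
  rewrite !sum0_S, IHn by (intros; apply H; lia). rewrite H by lia. reflexivity.
Qed.

Lemma sum0_plus (F G : nat -> R) (n : nat) :
  sum0 (fun j => F j + G j) n = sum0 F n + sum0 G n.
Proof. induction n; [unfold sum0; simpl; ring|]. rewrite !sum0_S, IHn. ring. Qed.

Lemma sum0_scal (c : R) (F : nat -> R) (n : nat) :
  sum0 (fun j => c * F j) n = c * sum0 F n.
Proof. induction n; [unfold sum0; simpl; ring|]. rewrite !sum0_S, IHn. ring. Qed.

Lemma sum0_const (c : R) (n : nat) : sum0 (fun _ => c) n = INR n * c.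
Proof. induction n; [unfold sum0; simpl; ring|]. rewrite sum0_S, IHn, S_INR. ring. Qed.

Lemma sum0_INR (n : nat) : sum0 INR n = INR n * (INR n - 1) / 2.
Proof. induction n; [unfold sum0; simpl; field|]. rewrite sum0_S, IHn, S_INR. field. Qed.

Lemma sum0_sum1 (F : nat -> nat -> R) (n m : nat) :
  sum0 (fun j => sum1 (fun i => F i j) m) n = sum1 (fun i => sum0 (F i) n) m.
Proof. induction m; simpl; [rewrite sum0_const; ring | rewrite sum0_plus, IHm; reflexivity]. Qed.

Definition ind_lt (j k : nat) : R := if Nat.ltb j k then 1 else 0.

Lemma sum0_ind_lt (k n : nat) : (k <= n)%nat -> sum0 (fun j => ind_lt j k) n = INR k.
Proof.
  induction n; intros Hk.
  - replace k with 0%nat by lia. reflexivity.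
  - rewrite sum0_S. unfold ind_lt at 2.
    destruct (Nat.ltb_spec n k) as [Hn | Hn].
    + replace k with (S n) in * by lia.
      rewrite (sum0_ext _ (fun _ => 1)), sum0_const, S_INR; [ring|].
      intros j Hj. unfold ind_lt. destruct (Nat.ltb_spec j (S n)); lia || reflexivity.
    + rewrite IHn by lia. ring.
Qed.

Lemma sum0_div_INR (q : nat) : (1 <= q)%nat -> sum0 (fun j => INR j / INR q) q = (INR q - 1) / 2.
Proof.
  intros Hq. assert (0 < INR q) by (apply lt_0_INR; lia).
  rewrite (sum0_ext _ (fun j => / INR q * INR j)) by (intros; unfold Rdiv; ring).
  rewrite sum0_scal, sum0_INR. field. lra.
Qed.

Lemma is_RInt_const_R (a b c : R) : is_RInt (fun _ => c) a b ((b - a) * c).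
Proof. exact (is_RInt_const a b c). Qed.

Lemma is_RInt_sum1 (F : nat -> R -> R) (I : nat -> R) (a b : R) (n : nat) :
  (forall i, (1 <= i <= n)%nat -> is_RInt (F i) a b (I i)) ->
  is_RInt (fun y => sum1 (fun i => F i y) n) a b (sum1 I n).
Proof.
  induction n as [|n IH]; intros H; simpl.
  - pose proof (is_RInt_const_R a b 0) as H0. now rewrite Rmult_0_r in H0.
  - apply (is_RInt_plus (fun y => sum1 (fun i => F i y) n) (F (S n))).
    + apply IH. intros i Hi; apply H; lia.
    + apply H; lia.
Qed.

Lemma is_RInt_const_inside (f : R -> R) (c u v : R) :
  u <= v -> (forall y, u < y < v -> f y = c) -> is_RInt f u v ((v - u) * c).
Proof.
  intros Huv Hf. apply is_RInt_ext with (fun _ => c); [|apply is_RInt_const_R].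
  intros y Hy. rewrite Rmin_left, Rmax_right in Hy by lra. symmetry; apply Hf; lra.
Qed.

Lemma is_RInt_ind_Ico_frac (u v : R) : 0 <= u <= v -> v <= 1 ->
  is_RInt (fun y => ind_Ico u v (frac y)) 0 1 (v - u).
Proof.
  intros Hu Hv. unfold ind_Ico.
  replace (v - u) with (plus (plus ((u - 0) * 0) ((v - u) * 1)) ((1 - v) * 0))
    by (unfold plus; simpl; ring).
  apply (is_RInt_Chasles (V := R_NormedModule) _ 0 v 1);
    [apply (is_RInt_Chasles (V := R_NormedModule) _ 0 u v)|];
    apply is_RInt_const_inside; try lra; intros y Hy; rewrite frac_small by lra;
    destruct (Rle_dec u y), (Rlt_dec y v); lra.
Qed.

Lemma is_RInt_ind_Ico_frac_centered (u v : R) : 0 <= u <= v -> v <= 1 ->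
  is_RInt (fun y => ind_Ico u v (frac y) - (v - u)) 0 1 0.
Proof.
  intros Hu Hv.
  pose proof (is_RInt_minus (V := R_NormedModule) _ _ 0 1 _ _
    (is_RInt_ind_Ico_frac u v Hu Hv) (is_RInt_const_R 0 1 (v - u))) as H.
  match type of H with is_RInt _ _ _ ?l =>
    replace l with 0 in H by (unfold minus, plus, opp; simpl; ring) end.
  exact H.
Qed.

Lemma is_RInt_sawtooth : is_RInt (fun y => frac y - 1/2) 0 1 0.
Proof.
  set (F := fun y => y * y / 2 - y / 2).
  assert (HF : is_RInt (fun y => y - 1/2) 0 1 (minus (F 1) (F 0))).
  { apply (is_RInt_derive F (fun y => y - 1/2)).
    - intros y _. unfold F. auto_derive; [exact I | field].
    - intros y _. apply continuity_pt_filterlim, continuity_pt_minus;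
        [apply continuity_pt_id | apply continuity_pt_const; intros ??; reflexivity]. }
  replace (minus (F 1) (F 0)) with 0 in HF by (unfold F, minus, plus, opp; simpl; field).
  apply is_RInt_ext with (fun y => y - 1/2); [|exact HF].
  intros y Hy. rewrite Rmin_left, Rmax_right in Hy by lra. now rewrite frac_small by lra.
Qed.

Lemma RInt_gfun (nu : nat) (x A : nat -> R) :
  (forall i, (1 <= i <= nu)%nat -> 0 <= xx x (i - 1) <= xx x i /\ xx x i <= 1) ->
  RInt (gfun nu x A) 0 1 = 0.
Proof.
  intros Hx.
  assert (Hg : is_RInt (gfun nu x A) 0 1
                 (plus (scal (sum1 A nu) 0) (sum1 (fun i => scal (cc A i) 0) nu))).
  { apply is_RInt_ext with (fun y => plus (scal (sum1 A nu) (frac y - 1/2))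
      (sum1 (fun i => scal (cc A i)
         (minus (ind_Ico (xx x (i - 1)) (xx x i) (frac y)) (xx x i - xx x (i - 1)))) nu)).
    { intros y _. unfold gfun, plus, scal, minus, opp; simpl. unfold mult, plus, opp; simpl.
      now rewrite Rmult_comm. }
    apply (is_RInt_plus (V := R_NormedModule)).
    - apply (is_RInt_scal (V := R_NormedModule)), is_RInt_sawtooth.
    - apply is_RInt_sum1. intros i Hi.
      apply (is_RInt_scal (V := R_NormedModule)).
      destruct (Hx i Hi). apply is_RInt_ind_Ico_frac_centered; lra. }
  rewrite (is_RInt_unique _ _ _ _ Hg).
  rewrite (sum1_ext (fun i => scal (cc A i) 0) (fun _ => 0)), sum1_const
    by (intros; apply Rmult_0_r).
  unfold plus, scal; simpl. unfold mult; simpl. ring.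
Qed.

Section ContinuedFraction.

Variable al : R.
Hypotheses (al_01 : 0 < al < 1) (al_irr : ~ is_rational al).

Lemma cf_rem_S (k : nat) : cf_rem al (S k) = 1 / cf_rem al k - IZR (cf_a al (S k)).
Proof. unfold cf_a. simpl. rewrite Nat.sub_0_r. reflexivity. Qed.

Lemma cf_rem_irrational (k : nat) : 0 < cf_rem al k < 1 /\ ~ is_rational (cf_rem al k).
Proof.
  induction k as [|k [Hr Hirr]]; [simpl; auto|].
  rewrite cf_rem_S. unfold cf_a. rewrite Nat.sub_succ, Nat.sub_0_r.
  set (r := cf_rem al k) in *. set (a := Int_part (1 / r)).
  destruct (base_Int_part (1 / r)) as [Ha1 Ha2]. fold a in Ha1, Ha2.
  assert (Hinv : 1 < 1 / r) by (apply (Rmult_lt_reg_r r); [lra|]; field_simplify; lra).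
  assert (Hrat : forall P Q : Z, IZR Q <> 0 -> 1 / r - IZR a = IZR P / IZR Q ->
            is_rational r).
  { intros P Q HQ E.
    assert (E' : 1 / r = (IZR a * IZR Q + IZR P) / IZR Q).
    { replace ((IZR a * IZR Q + IZR P) / IZR Q) with (IZR a + IZR P / IZR Q)
        by (field; auto). lra. }
    assert (Hden : IZR a * IZR Q + IZR P <> 0).
    { intros Hz. rewrite Hz in E'. unfold Rdiv in E'. rewrite Rmult_0_l in E'. lra. }
    exists Q, (a * Q + P)%Z. split.
    - intros Hz. apply Hden. now rewrite <- mult_IZR, <- plus_IZR, Hz.
    - rewrite plus_IZR, mult_IZR. replace r with (1 / (1 / r)) by (field; lra).
      rewrite E'. field. split; auto. }
  split.
  - split; [|lra]. destruct Ha1 as [Hlt | Heq]; [lra|].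
    exfalso. apply Hirr, (Hrat 0%Z 1%Z); simpl; [lra | unfold Rdiv; lra].
  - intros [P [Q [HQ E]]]. apply Hirr, (Hrat P Q); [apply not_0_IZR |]; auto.
Qed.

Lemma cf_a_bounds (k : nat) :
  (1 <= cf_a al (S k))%Z /\ IZR (cf_a al (S k)) * cf_rem al k < 1.
Proof.
  destruct (cf_rem_irrational k) as [[Hr0 Hr1] _].
  destruct (cf_rem_irrational (S k)) as [[Hs0 _] _].
  pose proof (cf_rem_S k) as Hs.
  assert (Hinv : 1 < 1 / cf_rem al k)
    by (apply (Rmult_lt_reg_r (cf_rem al k)); [lra|]; field_simplify; lra).
  unfold cf_a in *. rewrite Nat.sub_succ, Nat.sub_0_r in *.
  destruct (base_Int_part (1 / cf_rem al k)) as [Ha1 Ha2].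
  split.
  - assert (0 < Int_part (1 / cf_rem al k))%Z by (apply lt_IZR; simpl; lra). lia.
  - apply (Rmult_lt_reg_r (/ cf_rem al k)); [apply Rinv_0_lt_compat; lra|].
    rewrite Rmult_assoc, Rinv_r, Rmult_1_r, Rmult_1_l by lra.
    replace (/ cf_rem al k) with (1 / cf_rem al k) by (unfold Rdiv; ring). lra.
Qed.

(* [cf_err (S k) = |q_k alpha - p_k|] and [cf_err 0 = 1] plays the role of
   [|q_(-1) alpha - p_(-1)|]. *)
Fixpoint cf_err (k : nat) : R :=
  match k with O => 1 | S m => cf_err m * cf_rem al m end.

Fixpoint cf_ppair (k : nat) : Z * Z :=
  match k with
  | O => (0%Z, 1%Z)
  | S m => let (pm, pm1) := cf_ppair m in (cf_a al (S m) * pm + pm1, pm)%Z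
  end.

Lemma cf_err_pos (k : nat) : 0 < cf_err k.
Proof.
  induction k; simpl; [lra|].
  destruct (cf_rem_irrational k) as [[? ?] _]. apply Rmult_lt_0_compat; lra.
Qed.

Lemma cf_qpair_bounds (k : nat) :
  (1 <= fst (cf_qpair al k))%Z /\ (0 <= snd (cf_qpair al k))%Z.
Proof.
  induction k as [|k IH]; simpl; [lia|].
  destruct (cf_qpair al k) as [q q']. simpl in *.
  destruct (cf_a_bounds k). nia.
Qed.

Lemma cf_qpair_err (k : nat) :
  IZR (fst (cf_qpair al k)) * cf_err k + IZR (snd (cf_qpair al k)) * cf_err (S k) = 1.
Proof.
  induction k as [|k IH]; [simpl; ring|].
  simpl cf_qpair. destruct (cf_qpair al k) as [q q']. cbn [fst snd cf_err] in *.
  destruct (cf_rem_irrational k) as [[? ?] _].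
  rewrite <- IH, plus_IZR, mult_IZR, cf_rem_S. field. lra.
Qed.

Lemma cf_convergent_err (k : nat) :
  let (q, q') := cf_qpair al k in let (p, p') := cf_ppair k in
  IZR q * al - IZR p = (-1) ^ k * cf_err (S k) /\
  IZR q' * al - IZR p' = - (-1) ^ k * cf_err k.
Proof.
  induction k as [|k IH]; [simpl; split; ring|].
  simpl cf_qpair; simpl cf_ppair.
  destruct (cf_qpair al k) as [q q'], (cf_ppair k) as [p p'].
  destruct IH as [E E']. destruct (cf_rem_irrational k) as [[? ?] _].
  split; [|rewrite E; cbn [pow]; ring].
  rewrite !plus_IZR, !mult_IZR.
  replace ((IZR (cf_a al (S k)) * IZR q + IZR q') * al - (IZR (cf_a al (S k)) * IZR p + IZR p'))
    with (IZR (cf_a al (S k)) * (IZR q * al - IZR p) + (IZR q' * al - IZR p')) by ring.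
  rewrite E, E'. replace (IZR (cf_a al (S k))) with (1 / cf_rem al k - cf_rem al (S k))
    by (rewrite cf_rem_S; ring).
  cbn [pow cf_err]. field. lra.
Qed.

Lemma cf_convergent_coprime (k : nat) :
  Z.gcd (fst (cf_ppair k)) (cf_q al k) = 1%Z.
Proof.
  pose proof (cf_convergent_err k) as E. pose proof (cf_qpair_err k) as W.
  unfold cf_q. destruct (cf_qpair al k) as [q q'], (cf_ppair k) as [p p'].
  cbn [fst snd] in *. destruct E as [E E'].
  assert (Hdet : IZR (q * p' - p * q') = (-1) ^ k).
  { rewrite minus_IZR, !mult_IZR.
    replace (IZR p) with (IZR q * al - (-1) ^ k * cf_err (S k)) by lra.
    replace (IZR p') with (IZR q' * al + (-1) ^ k * cf_err k) by lra.
    transitivity ((-1) ^ k * (IZR q * cf_err k + IZR q' * cf_err (S k))); [ring|].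
    rewrite W. ring. }
  apply Z.bezout_1_gcd.
  destruct (Nat.Even_or_Odd k) as [[t ->] | [t ->]].
  - rewrite pow_1_even in Hdet. apply eq_IZR in Hdet. exists (- q')%Z, p'. lia.
  - rewrite Nat.add_1_r, pow_1_odd in Hdet. apply eq_IZR in Hdet. exists q', (- p')%Z. lia.
Qed.

Lemma cf_q_ge1 (k : nat) : (1 <= cf_q al k)%Z.
Proof. apply cf_qpair_bounds. Qed.

Lemma cf_err_q_a_lt1 (k : nat) :
  cf_err (S k) * IZR (cf_q al k) * IZR (cf_a al (S k)) < 1.
Proof.
  pose proof (cf_qpair_err k) as W. pose proof (cf_qpair_bounds k) as [Hq Hq'].
  unfold cf_q. destruct (cf_qpair al k) as [q q']. cbn [fst snd] in *.
  apply IZR_le in Hq, Hq'.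
  pose proof (cf_err_pos k). pose proof (cf_err_pos (S k)).
  destruct (cf_a_bounds k) as [Ha Har]. apply IZR_le in Ha.
  destruct (cf_rem_irrational k) as [[? ?] _].
  assert (Hqe : IZR q * cf_err k <= 1) by nra.
  cbn [cf_err].
  replace (cf_err k * cf_rem al k * IZR q * IZR (cf_a al (S k)))
    with ((IZR q * cf_err k) * (IZR (cf_a al (S k)) * cf_rem al k)) by ring.
  assert (0 <= IZR (cf_a al (S k)) * cf_rem al k) by (simpl in Ha; nra).
  simpl in Hq. nra.
Qed.

Lemma cf_convergent (k : nat) : exists p : Z,
  (1 <= Z.to_nat (cf_q al k))%nat /\
  Z.gcd p (Z.of_nat (Z.to_nat (cf_q al k))) = 1%Z /\
  INR (Z.to_nat (cf_q al k)) * al = IZR p + (-1) ^ k * cf_err (S k) /\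
  cf_err (S k) * INR (Z.to_nat (cf_q al k)) * IZR (cf_a al (S k)) < 1.
Proof.
  pose proof (cf_q_ge1 k) as Hq. pose proof (cf_err_q_a_lt1 k) as Hlt.
  pose proof (cf_convergent_err k) as E. pose proof (cf_convergent_coprime k) as Hgcd.
  exists (fst (cf_ppair k)).
  rewrite INR_IZR_INZ, Z2Nat.id by lia. split; [lia|]. split; [exact Hgcd|].
  split; [|exact Hlt].
  unfold cf_q in *. destruct (cf_qpair al k) as [q q'], (cf_ppair k) as [p p'].
  cbn [fst snd] in *. lra.
Qed.

End ContinuedFraction.

Lemma sum_cf_a_nonneg (al : R) (n : nat) : 0 < al < 1 -> ~ is_rational al ->
  0 <= sum1 (fun i => IZR (cf_a al i)) n.
Proof.
  intros Hal Hirr. apply sum1_nonneg. intros i Hi.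
  replace i with (S (i - 1)) by lia. destruct (cf_a_bounds al Hal Hirr (i - 1)) as [Ha _].
  apply IZR_le in Ha. lra.
Qed.

Definition orbit_res (p : Z) (q n : nat) : nat :=
  Z.to_nat ((Z.of_nat n * p) mod Z.of_nat q).

Lemma orbit_res_lt (p : Z) (q n : nat) : (1 <= q)%nat -> (orbit_res p q n < q)%nat.
Proof.
  intros Hq. unfold orbit_res.
  pose proof (Z.mod_pos_bound (Z.of_nat n * p) (Z.of_nat q) ltac:(lia)). lia.
Qed.

Lemma orbit_res_period (p : Z) (q t n : nat) :
  (1 <= q)%nat -> orbit_res p q (t * q + n) = orbit_res p q n.
Proof.
  intros Hq. unfold orbit_res. f_equal.
  replace (Z.of_nat (t * q + n) * p)%Z
    with (Z.of_nat n * p + (Z.of_nat t * p) * Z.of_nat q)%Z by lia.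
  apply Z.mod_add. lia.
Qed.

Lemma orbit_res_inj (p : Z) (q n1 n2 : nat) : Z.gcd p (Z.of_nat q) = 1%Z ->
  (1 <= n1 <= q)%nat -> (1 <= n2 <= q)%nat -> orbit_res p q n1 = orbit_res p q n2 ->
  n1 = n2.
Proof.
  intros Hpq H1 H2 E. unfold orbit_res in E.
  pose proof (Z.mod_pos_bound (Z.of_nat n1 * p) (Z.of_nat q) ltac:(lia)).
  pose proof (Z.mod_pos_bound (Z.of_nat n2 * p) (Z.of_nat q) ltac:(lia)).
  apply Z2Nat.inj in E; [|lia|lia].
  assert (Hdiv : (Z.of_nat q | p * (Z.of_nat n1 - Z.of_nat n2))%Z).
  { apply Z.mod_divide; [lia|].
    replace (p * (Z.of_nat n1 - Z.of_nat n2))%Z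
      with (Z.of_nat n1 * p - Z.of_nat n2 * p)%Z by ring.
    rewrite Zminus_mod, E, Z.sub_diag. reflexivity. }
  apply Z.gauss in Hdiv; [|rewrite Z.gcd_comm; exact Hpq].
  destruct Hdiv as [c Hc].
  assert (c = 0)%Z by (destruct (Z.lt_total c 0) as [|[|]]; nia). lia.
Qed.

Lemma sum1_orbit_period (V : nat -> R) (p : Z) (q b : nat) : (1 <= q)%nat ->
  sum1 (fun n => V (orbit_res p q n)) (b * q) =
  INR b * sum1 (fun n => V (orbit_res p q n)) q.
Proof.
  intros Hq. induction b; [simpl; ring|].
  rewrite Nat.mul_succ_l, sum1_add_range, IHb, S_INR.
  rewrite (sum1_ext (fun i => V (orbit_res p q (b * q + i)))
                    (fun n => V (orbit_res p q n))); [ring|].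
  intros i _. now rewrite orbit_res_period.
Qed.

Lemma sum1_orbit_perm (V : nat -> R) (p : Z) (q : nat) :
  (1 <= q)%nat -> Z.gcd p (Z.of_nat q) = 1%Z ->
  sum1 (fun n => V (orbit_res p q n)) q = sum0 V q.
Proof.
  intros Hq Hpq. rewrite sum1_sum_list. unfold sum0.
  rewrite <- (sum_list_map V (orbit_res p q)). apply sum_list_perm.
  apply NoDup_Permutation_bis.
  - apply FinFun.Injective_map_NoDup_in; [|apply seq_NoDup].
    intros n1 n2 H1 H2. apply in_seq in H1, H2. apply orbit_res_inj; auto; lia.
  - rewrite length_map, !length_seq. lia.
  - intros j Hj. apply in_map_iff in Hj. destruct Hj as [n [<- _]].
    apply in_seq. pose proof (orbit_res_lt p q n Hq). lia.
Qed.

Lemma orbit_decomp (al e : R) (p : Z) (q n : nat) : (1 <= q)%nat ->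
  INR q * al = IZR p + e ->
  INR n * al = IZR ((Z.of_nat n * p) / Z.of_nat q)
               + (INR (orbit_res p q n) / INR q + INR n * e / INR q).
Proof.
  intros Hq He. assert (Hq0 : 0 < INR q) by (apply lt_0_INR; lia).
  unfold orbit_res.
  pose proof (Z.mod_pos_bound (Z.of_nat n * p) (Z.of_nat q) ltac:(lia)).
  rewrite (INR_IZR_INZ (Z.to_nat _)), Z2Nat.id by lia.
  pose proof (Z.div_mod (Z.of_nat n * p) (Z.of_nat q) ltac:(lia)) as E.
  apply (f_equal IZR) in E. rewrite plus_IZR, !mult_IZR, <- !INR_IZR_INZ in E.
  replace (IZR ((Z.of_nat n * p) mod Z.of_nat q))
    with (INR n * IZR p - INR q * IZR (Z.of_nat n * p / Z.of_nat q)) by lra.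
  replace al with ((IZR p + e) / INR q) by (rewrite <- He; field; lra). field. lra.
Qed.

Definition on_grid (nu : nat) (x : nat -> R) (L : nat) (a : nat -> nat) : Prop :=
  (1 <= L)%nat /\
  (forall i, (i <= nu)%nat -> xx x i = INR (a i) / INR L /\ (a i < L)%nat) /\
  (forall i, (1 <= i <= nu)%nat -> xx x (i - 1) <= xx x i).

Lemma common_denominator (n : nat) (y : nat -> R) :
  (forall i, (1 <= i <= n)%nat -> is_rational (y i)) ->
  exists L : nat, (1 <= L)%nat /\
    forall i, (1 <= i <= n)%nat -> exists z : Z, y i * INR L = IZR z.
Proof.
  induction n as [|n IH]; intros Hrat.
  - exists 1%nat. split; [lia | intros; lia].
  - destruct IH as [L [HL HLz]]; [intros; apply Hrat; lia|].
    destruct (Hrat (S n) ltac:(lia)) as [P [Q [HQ E]]].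
    assert (HQ' : IZR Q <> 0) by (apply not_0_IZR; auto).
    exists (L * Z.to_nat (Q * Q))%nat. split; [nia|].
    assert (EQ : INR (Z.to_nat (Q * Q)) = IZR Q * IZR Q)
      by (rewrite INR_IZR_INZ, Z2Nat.id, mult_IZR; [reflexivity | nia]).
    intros i Hi. rewrite mult_INR, EQ. destruct (Nat.eq_dec i (S n)) as [-> | Hne].
    + exists (P * Q * Z.of_nat L)%Z. rewrite E, !mult_IZR, <- INR_IZR_INZ. field. exact HQ'.
    + destruct (HLz i ltac:(lia)) as [z Hz]. exists (z * (Q * Q))%Z.
      rewrite !mult_IZR, <- Hz. ring.
Qed.

Lemma increasing_le (nu : nat) (x : nat -> R) :
  (forall i, (1 <= i < nu)%nat -> x i < x (S i)) ->
  forall i j, (1 <= i <= j)%nat -> (j <= nu)%nat -> x i <= x j.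
Proof.
  intros Hinc i j. induction j as [|j IH]; intros Hij Hj; [lia|].
  destruct (Nat.eq_dec i (S j)) as [-> | Hne]; [lra|].
  assert (x i <= x j) by (apply IH; lia). assert (x j < x (S j)) by (apply Hinc; lia). lra.
Qed.

Lemma on_grid_exists (nu : nat) (x : nat -> R) :
  (forall i, (1 <= i <= nu)%nat -> is_rational (x i)) -> 0 <= x 1%nat -> x nu < 1 ->
  (forall i, (1 <= i < nu)%nat -> x i < x (S i)) ->
  exists L a, on_grid nu x L a.
Proof.
  intros Hrat H0 H1 Hinc.
  assert (Hb : forall i, (i <= nu)%nat -> 0 <= xx x i < 1).
  { intros [|i] Hi; simpl; [lra|].
    pose proof (increasing_le nu x Hinc 1 (S i) ltac:(lia) Hi).
    pose proof (increasing_le nu x Hinc (S i) nu ltac:(lia) ltac:(lia)). lra. }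
  assert (Hmono : forall i, (1 <= i <= nu)%nat -> xx x (i - 1) <= xx x i).
  { intros [|[|i]] Hi; [lia | simpl; lra |].
    rewrite Nat.sub_succ, Nat.sub_0_r. apply (increasing_le nu x Hinc); lia. }
  destruct (common_denominator nu x Hrat) as [L [HL HLz]].
  assert (Hz : forall i, (i <= nu)%nat -> exists z : Z, xx x i * INR L = IZR z).
  { intros [|i] Hi; [exists 0%Z; simpl; ring | apply HLz; lia]. }
  assert (HL0 : 0 < INR L) by (apply lt_0_INR; lia).
  exists L, (fun i => Z.to_nat (Int_part (xx x i * INR L))).
  split; [exact HL|]. split; [|exact Hmono].
  intros i Hi. destruct (Hz i Hi) as [z E], (Hb i Hi) as [Hlo Hhi].
  rewrite E, (Int_part_unique (IZR z) z) by lra.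
  assert (Hz0 : (0 <= z)%Z) by (apply le_IZR; rewrite <- E; nra).
  assert (HzL : (z < Z.of_nat L)%Z) by (apply lt_IZR; rewrite <- E, <- INR_IZR_INZ; nra).
  split; [|lia].
  rewrite INR_IZR_INZ, Z2Nat.id, <- E by exact Hz0. field. lra.
Qed.

Lemma lt_grid_scaled (j q k L : nat) (d : R) : (1 <= q)%nat -> (1 <= L)%nat ->
  (INR j / INR q + d < INR k / INR L <->
   INR (j * L) + d * (INR q * INR L) < INR (k * q)).
Proof.
  intros Hq HL.
  assert (Hq0 : 0 < INR q) by (apply lt_0_INR; lia).
  assert (HL0 : 0 < INR L) by (apply lt_0_INR; lia).
  rewrite !mult_INR.
  replace (INR j / INR q + d) with ((INR j * INR L + d * (INR q * INR L)) / (INR q * INR L))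
    by (field; lra).
  replace (INR k / INR L) with (INR k * INR q / (INR q * INR L)) by (field; lra).
  assert (Hinv : 0 < / (INR q * INR L)) by (apply Rinv_0_lt_compat; nra).
  split; intros Hlt.
  - apply Rmult_lt_reg_r with (/ (INR q * INR L)); [exact Hinv | exact Hlt].
  - apply Rmult_lt_compat_r; [exact Hinv | exact Hlt].
Qed.

Lemma lt_grid_right (j q k L : nat) (d : R) : (1 <= q)%nat -> (1 <= L)%nat ->
  0 <= d < 1 / (INR q * INR L) ->
  (INR j / INR q + d < INR k / INR L <-> (j * L < k * q)%nat).
Proof.
  intros Hq HL Hd. rewrite lt_grid_scaled by assumption.
  assert (Hq0 : 0 < INR q) by (apply lt_0_INR; lia).
  assert (HL0 : 0 < INR L) by (apply lt_0_INR; lia).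
  assert (HqL : 0 < INR q * INR L) by (apply Rmult_lt_0_compat; assumption).
  assert (Hd' : 0 <= d * (INR q * INR L) < 1).
  { split; [nra|]. destruct Hd as [_ Hd].
    apply (Rmult_lt_compat_r (INR q * INR L)) in Hd; [|lra].
    replace (1 / (INR q * INR L) * (INR q * INR L)) with 1 in Hd by (field; lra). lra. }
  destruct (Nat.lt_ge_cases (j * L) (k * q)) as [Hlt | Hge].
  - pose proof (le_INR _ _ Hlt) as HR. rewrite S_INR in HR. split; intros; [exact Hlt | lra].
  - pose proof (le_INR _ _ Hge) as HR. split; intros; [lra | lia].
Qed.

Lemma lt_grid_left (j q k L : nat) (d : R) : (1 <= q)%nat -> (1 <= L)%nat ->
  - (1 / (INR q * INR L)) < d < 0 ->
  (INR j / INR q + d < INR k / INR L <-> (j * L <= k * q)%nat).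
Proof.
  intros Hq HL Hd. rewrite lt_grid_scaled by assumption.
  assert (Hq0 : 0 < INR q) by (apply lt_0_INR; lia).
  assert (HL0 : 0 < INR L) by (apply lt_0_INR; lia).
  assert (HqL : 0 < INR q * INR L) by (apply Rmult_lt_0_compat; assumption).
  assert (Hd' : -1 < d * (INR q * INR L) < 0).
  { split; [|nra]. destruct Hd as [Hd _].
    apply (Rmult_lt_compat_r (INR q * INR L)) in Hd; [|lra].
    replace (- (1 / (INR q * INR L)) * (INR q * INR L)) with (-1) in Hd by (field; lra). lra. }
  destruct (Nat.le_gt_cases (j * L) (k * q)) as [Hle | Hgt].
  - pose proof (le_INR _ _ Hle) as HR. split; intros; [exact Hle | lra].
  - pose proof (le_INR _ _ Hgt) as HR. rewrite S_INR in HR. split; intros; [lra | lia].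
Qed.

Lemma grid_index_right (j k q m s L : nat) :
  (q + s = m * L)%nat -> (s <= 1)%nat -> (k < L)%nat -> (j * L < k * q <-> j < k * m)%nat.
Proof. intros Hq Hs Hk. split; intros H; nia. Qed.

Lemma grid_index_left (j k q m s L : nat) :
  (q = m * L + s)%nat -> (s <= 1)%nat -> (k < L)%nat -> (j * L <= k * q <-> j <= k * m)%nat.
Proof. intros Hq Hs Hk. split; intros H; nia. Qed.

Lemma Rlt_dec_ind_lt (u v : R) (j k : nat) :
  (u < v <-> (j < k)%nat) -> (if Rlt_dec u v then 1 else 0) = ind_lt j k.
Proof.
  intros H. unfold ind_lt.
  destruct (Rlt_dec u v) as [Huv | Huv], (Nat.ltb_spec j k) as [Hjk | Hjk];
    try reflexivity; exfalso.
  - apply H in Huv. lia.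
  - apply Huv, H, Hjk.
Qed.

Definition gfun_profile (nu : nat) (x A : nat -> R) (t : R) (I : nat -> R) : R :=
  (t - 1/2) * sum1 A nu +
  sum1 (fun i => cc A i * (I i - I (i - 1)%nat - (xx x i - xx x (i - 1)))) nu.

Definition step_integral (nu : nat) (x A : nat -> R) : R :=
  sum1 (fun i => cc A i * (xx x i - xx x (i - 1))) nu.

Section Profile.

Variables (nu : nat) (x A : nat -> R).

Lemma gfun_eq_profile (y : R) : (forall i, (1 <= i <= nu)%nat -> xx x (i - 1) <= xx x i) ->
  gfun nu x A y =
  gfun_profile nu x A (frac y) (fun i => if Rlt_dec (frac y) (xx x i) then 1 else 0).
Proof.
  intros Hmono. unfold gfun, gfun_profile. f_equal. apply sum1_ext. intros i Hi.
  specialize (Hmono i Hi). unfold ind_Ico.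
  destruct (Rle_dec (xx x (i - 1)) (frac y)), (Rlt_dec (frac y) (xx x i)),
    (Rlt_dec (frac y) (xx x (i - 1))); f_equal; lra.
Qed.

Lemma gfun_profile_ext (t : R) (I J : nat -> R) :
  (forall i, (1 <= i <= nu)%nat -> I i - I (i - 1)%nat = J i - J (i - 1)%nat) ->
  gfun_profile nu x A t I = gfun_profile nu x A t J.
Proof.
  intros H. unfold gfun_profile. f_equal. apply sum1_ext. intros i Hi.
  rewrite <- H by exact Hi. reflexivity.
Qed.

Lemma gfun_profile_shift (t d : R) (I : nat -> R) :
  gfun_profile nu x A (t + d) I = gfun_profile nu x A t I + sum1 A nu * d.
Proof. unfold gfun_profile. ring. Qed.

Lemma sum0_gfun_profile (T : nat -> R) (I : nat -> nat -> R) (q : nat) :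
  sum0 (fun j => gfun_profile nu x A (T j) (I j)) q =
  (sum0 T q - INR q / 2) * sum1 A nu +
  sum1 (fun i => cc A i * (sum0 (fun j => I j i) q - sum0 (fun j => I j (i - 1)%nat) q
                           - INR q * (xx x i - xx x (i - 1)))) nu.
Proof.
  unfold gfun_profile. rewrite sum0_plus, sum0_sum1.
  rewrite (sum0_ext (fun j => (T j - 1/2) * sum1 A nu)
                    (fun j => sum1 A nu * T j + (- (sum1 A nu / 2)))) by (intros; field).
  rewrite sum0_plus, sum0_scal, sum0_const. apply (f_equal2 Rplus); [field|].
  apply sum1_ext. intros i _.
  rewrite (sum0_ext
    (fun j => cc A i * (I j i - I j (i - 1)%nat - (xx x i - xx x (i - 1))))
    (fun j => cc A i * I j i + (- cc A i * I j (i - 1)%nat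
                               + - (cc A i * (xx x i - xx x (i - 1)))))) by (intros; ring).
  rewrite !sum0_plus, !sum0_scal, sum0_const. ring.
Qed.

End Profile.

Definition right_value (nu : nat) (x A : nat -> R) (a : nat -> nat) (m q j : nat) : R :=
  gfun_profile nu x A (INR j / INR q) (fun i => ind_lt j (a i * m)).

(* The left limit of g at 0 is its left limit at 1, whence the extra [ind_lt j 1]. *)
Definition left_value (nu : nat) (x A : nat -> R) (a : nat -> nat) (m q j : nat) : R :=
  gfun_profile nu x A (INR j / INR q + ind_lt j 1) (fun i => ind_lt j (S (a i * m))).

Section GridValues.

Variables (nu : nat) (x A : nat -> R) (L : nat) (a : nat -> nat).
Hypothesis Hgrid : on_grid nu x L a.

Lemma on_grid_bounds (i : nat) : (1 <= i <= nu)%nat ->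
  0 <= xx x (i - 1) <= xx x i /\ xx x i <= 1.
Proof.
  intros Hi. destruct Hgrid as [HL [Ha Hmono]].
  destruct (Ha i ltac:(lia)) as [Ei Hai], (Ha (i - 1)%nat ltac:(lia)) as [Ei' _].
  assert (0 < INR L) by (apply lt_0_INR; lia).
  pose proof (Hmono i Hi). split; [split|]; [| lra |].
  - rewrite Ei'. apply Rmult_le_pos; [apply pos_INR | apply Rlt_le, Rinv_0_lt_compat; lra].
  - rewrite Ei. apply (Rmult_le_reg_r (INR L)); [lra|].
    field_simplify; [apply lt_INR in Hai; lra | lra].
Qed.

Lemma RInt_gfun_on_grid : RInt (gfun nu x A) 0 1 = 0.
Proof. apply RInt_gfun, on_grid_bounds. Qed.

Lemma gfun_right (m q s j : nat) (d : R) :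
  (1 <= q)%nat -> (q + s = m * L)%nat -> (s <= 1)%nat -> (j < q)%nat ->
  0 <= d < 1 / (INR q * INR L) ->
  gfun nu x A (INR j / INR q + d) = right_value nu x A a m q j + sum1 A nu * d.
Proof.
  intros Hq Hm Hs Hj Hd. destruct Hgrid as [HL [Ha Hmono]].
  assert (0 < INR L) by (apply lt_0_INR; lia).
  assert (Hy : 0 <= INR j / INR q + d < 1).
  { split.
    - assert (0 <= INR j / INR q)
        by (apply Rmult_le_pos; [apply pos_INR | apply Rlt_le, Rinv_0_lt_compat, lt_0_INR; lia]).
      lra.
    - replace 1 with (INR L / INR L) by (field; lra).
      apply (lt_grid_right j q L L d); auto. nia. }
  rewrite gfun_eq_profile, frac_small by assumption.
  unfold right_value. rewrite <- gfun_profile_shift. apply gfun_profile_ext.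
  assert (Hind : forall k, (k <= nu)%nat ->
    (if Rlt_dec (INR j / INR q + d) (xx x k) then 1 else 0) = ind_lt j (a k * m)).
  { intros k Hk. destruct (Ha k Hk) as [-> Hak]. apply Rlt_dec_ind_lt.
    rewrite (lt_grid_right j q (a k) L d), (grid_index_right j (a k) q m s L) by auto.
    reflexivity. }
  intros i Hi. rewrite !Hind by lia. reflexivity.
Qed.

Lemma gfun_left (m q s j : nat) (d : R) :
  (1 <= q)%nat -> (q = m * L + s)%nat -> (s <= 1)%nat -> (j < q)%nat ->
  - (1 / (INR q * INR L)) < d < 0 ->
  gfun nu x A (INR j / INR q + d) = left_value nu x A a m q j + sum1 A nu * d.
Proof.
  intros Hq Hm Hs Hj Hd. destruct Hgrid as [HL [Ha Hmono]].
  assert (HL0 : 0 < INR L) by (apply lt_0_INR; lia).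
  assert (Hq0 : 0 < INR q) by (apply lt_0_INR; lia).
  assert (Hbelow : forall j', ~ (INR j' / INR q + d < INR 0 / INR L) ->
                               0 <= INR j' / INR q + d).
  { intros j' Hn. simpl (INR 0) in Hn. unfold Rdiv at 2 in Hn. lra. }
  rewrite gfun_eq_profile by exact Hmono. unfold left_value.
  destruct (Nat.eq_dec j 0) as [-> | Hj0].
  - assert (Hfr : frac (INR 0 / INR q + d) = INR q / INR q + d).
    { assert (Hlo : 0 <= INR q / INR q + d).
      { apply Hbelow. rewrite (lt_grid_left q q 0 L d) by auto. nia. }
      rewrite (frac_unique _ (-1)); [simpl; field; lra|].
      replace (INR q / INR q) with 1 in Hlo by (field; lra). simpl. unfold Rdiv. lra. }
    rewrite Hfr, <- gfun_profile_shift.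
    replace (INR 0 / INR q + ind_lt 0 1) with (INR q / INR q) by (simpl; unfold ind_lt; simpl; field; lra).
    apply gfun_profile_ext.
    assert (Hind : forall k, (k <= nu)%nat ->
      (if Rlt_dec (INR q / INR q + d) (xx x k) then 1 else 0) = 0).
    { intros k Hk. destruct (Ha k Hk) as [-> Hak].
      destruct (Rlt_dec _ _) as [Hlt | _]; [|reflexivity].
      apply (lt_grid_left q q (a k) L d) in Hlt; auto. nia. }
    intros i Hi. rewrite !Hind by lia. unfold ind_lt. simpl. ring.
  - assert (Hy : 0 <= INR j / INR q + d < 1).
    { split.
      - apply Hbelow. rewrite (lt_grid_left j q 0 L d) by auto. nia.
      - replace 1 with (INR L / INR L) by (field; lra).
        apply (lt_grid_left j q L L d); auto. nia. }
    rewrite frac_small by exact Hy.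
    replace (INR j / INR q + ind_lt j 1) with (INR j / INR q)
      by (unfold ind_lt; destruct (Nat.ltb_spec j 1); [lia | ring]).
    rewrite <- gfun_profile_shift. apply gfun_profile_ext.
    assert (Hind : forall k, (k <= nu)%nat ->
      (if Rlt_dec (INR j / INR q + d) (xx x k) then 1 else 0) = ind_lt j (S (a k * m))).
    { intros k Hk. destruct (Ha k Hk) as [-> Hak]. apply Rlt_dec_ind_lt.
      rewrite (lt_grid_left j q (a k) L d), (grid_index_left j (a k) q m s L) by auto. lia. }
    intros i Hi. rewrite !Hind by lia. reflexivity.
Qed.

Lemma sum0_right_value (m q s : nat) :
  (1 <= q)%nat -> (q + s = m * L)%nat -> (s <= 1)%nat ->
  sum0 (right_value nu x A a m q) q = - sum1 A nu / 2 + INR s * step_integral nu x A.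
Proof.
  intros Hq Hm Hs. destruct Hgrid as [HL [Ha _]].
  assert (0 < INR L) by (apply lt_0_INR; lia).
  unfold right_value, step_integral. rewrite sum0_gfun_profile, sum0_div_INR by exact Hq.
  rewrite <- (sum1_scal (INR s)). apply (f_equal2 Rplus); [field|].
  apply sum1_ext. intros i Hi.
  destruct (Ha i ltac:(lia)) as [Ei Hai], (Ha (i - 1)%nat ltac:(lia)) as [Ei' Hai'].
  rewrite !sum0_ind_lt by nia.
  assert (Eq : INR q = INR m * INR L - INR s).
  { apply (f_equal INR) in Hm. rewrite plus_INR, mult_INR in Hm. lra. }
  rewrite Ei, Ei', !mult_INR, Eq. field. lra.
Qed.

Lemma sum0_left_value (m q s : nat) :
  (1 <= q)%nat -> (q = m * L + s)%nat -> (s <= 1)%nat ->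
  sum0 (left_value nu x A a m q) q = sum1 A nu / 2 - INR s * step_integral nu x A.
Proof.
  intros Hq Hm Hs. destruct Hgrid as [HL [Ha _]].
  assert (0 < INR L) by (apply lt_0_INR; lia).
  unfold left_value. rewrite sum0_gfun_profile, sum0_plus, sum0_div_INR by exact Hq.
  rewrite sum0_ind_lt by lia.
  replace (sum1 A nu / 2 - INR s * step_integral nu x A)
    with (sum1 A nu / 2 + - INR s * step_integral nu x A) by ring.
  unfold step_integral. rewrite <- (sum1_scal (- INR s)).
  apply (f_equal2 Rplus); [simpl; field|].
  apply sum1_ext. intros i Hi.
  destruct (Ha i ltac:(lia)) as [Ei Hai], (Ha (i - 1)%nat ltac:(lia)) as [Ei' Hai'].
  rewrite !sum0_ind_lt by nia.
  assert (Eq : INR q = INR m * INR L + INR s).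
  { apply (f_equal INR) in Hm. rewrite plus_INR, mult_INR in Hm. lra. }
  rewrite Ei, Ei', !S_INR, !mult_INR, Eq. field. lra.
Qed.

End GridValues.

Lemma gfun_add_IZR (nu : nat) (x A : nat -> R) (k : Z) (y : R) :
  gfun nu x A (IZR k + y) = gfun nu x A y.
Proof. unfold gfun. now rewrite (Rplus_comm (IZR k) y), frac_add_IZR. Qed.

Lemma SN_gfun_convergent (nu : nat) (x A : nat -> R) (al e : R) (p : Z) (q b : nat)
  (V : nat -> R) :
  (1 <= q)%nat -> Z.gcd p (Z.of_nat q) = 1%Z -> INR q * al = IZR p + e ->
  RInt (gfun nu x A) 0 1 = 0 ->
  (forall n j, (1 <= n <= b * q)%nat -> (j < q)%nat ->
     gfun nu x A (INR j / INR q + INR n * e / INR q) = V j + sum1 A nu * (INR n * e / INR q)) ->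
  SN (gfun nu x A) al (b * q) =
  INR b * sum0 V q + sum1 A nu * e / INR q * (INR (b * q) * (INR (b * q) + 1) / 2).
Proof.
  intros Hq Hpq He Hint HV. assert (0 < INR q) by (apply lt_0_INR; lia).
  unfold SN. rewrite Hint.
  rewrite (sum1_ext _ (fun n => V (orbit_res p q n) + (sum1 A nu * e / INR q) * INR n)).
  - rewrite sum1_plus, sum1_orbit_period, sum1_orbit_perm, sum1_scal, sum1_INR by auto. ring.
  - intros n Hn. rewrite (orbit_decomp al e p q n Hq He), gfun_add_IZR, HV
      by (auto; apply orbit_res_lt; auto). field. lra.
Qed.

Lemma drift_bound (S e Q B aK c kap : R) :
  1 <= Q -> 0 <= B -> 0 < aK -> Rabs e * Q * aK < 1 -> B <= c * aK ->
  c <= kap -> 1 / aK <= kap ->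
  Rabs (S * e / Q * (B * Q * (B * Q + 1) / 2)) <= Rabs S * B * kap.
Proof.
  intros HQ HB HaK He Hb Hc Ha.
  replace (S * e / Q * (B * Q * (B * Q + 1) / 2)) with (S * e * (B * (B * Q + 1) / 2))
    by (field; lra).
  rewrite !Rabs_mult, (Rabs_pos_eq (B * (B * Q + 1) / 2)) by nra.
  pose proof (Rabs_pos S). pose proof (Rabs_pos e).
  assert (HeQ : Rabs e * Q <= 1 / aK).
  { apply (Rmult_le_reg_r aK); [lra|]. replace (1 / aK * aK) with 1 by (field; lra). lra. }
  assert (HBa : B / aK <= c).
  { apply (Rmult_le_reg_r aK); [lra|]. replace (B / aK * aK) with B by (field; lra). lra. }
  assert (Hdrift : Rabs e * (B * Q + 1) <= 2 * kap).
  { assert (Rabs e * (B * Q + 1) <= Rabs e * Q * (B + 1)) by nra.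
    assert (Rabs e * Q * (B + 1) <= (B + 1) / aK) by (unfold Rdiv; nra).
    replace ((B + 1) / aK) with (B / aK + 1 / aK) in * by (field; lra). lra. }
  replace (Rabs S * Rabs e * (B * (B * Q + 1) / 2))
    with (Rabs S * B * (Rabs e * (B * Q + 1)) / 2) by field.
  assert (0 <= Rabs S * B) by nra. nra.
Qed.

Lemma perturbation_small (n b q L : nat) (e c aK : R) :
  (1 <= q)%nat -> (1 <= L)%nat -> (n <= b * q)%nat -> 0 < c -> c <= 1 / INR L ->
  INR b <= c * aK -> Rabs e * INR q * aK < 1 ->
  Rabs (INR n * e / INR q) < 1 / (INR q * INR L).
Proof.
  intros Hq HL Hn Hc HcL Hb He.
  assert (Hq0 : 0 < INR q) by (apply lt_0_INR; lia).
  assert (HL0 : 0 < INR L) by (apply lt_0_INR; lia).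
  apply le_INR in Hn. rewrite mult_INR in Hn.
  pose proof (pos_INR n). pose proof (Rabs_pos e).
  rewrite Rabs_div, Rabs_mult, (Rabs_pos_eq (INR n)), (Rabs_pos_eq (INR q)) by lra.
  apply (Rmult_lt_reg_r (INR q * INR L)); [nra|].
  replace (INR n * Rabs e / INR q * (INR q * INR L)) with (INR n * Rabs e * INR L) by (field; lra).
  replace (1 / (INR q * INR L) * (INR q * INR L)) with 1 by (field; lra).
  assert (INR L * c <= 1).
  { apply (Rmult_le_compat_l (INR L)) in HcL; [|lra].
    replace (INR L * (1 / INR L)) with 1 in HcL by (field; lra). lra. }
  assert (HeQ : 0 <= Rabs e * INR q) by nra.
  assert (Hne : INR n * Rabs e <= INR b * (Rabs e * INR q)) by nra.
  assert (Hbe : INR b * (Rabs e * INR q) <= c * aK * (Rabs e * INR q))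
    by (apply Rmult_le_compat_r; assumption).
  assert (Hce : c * aK * (Rabs e * INR q) < c) by nra.
  nra.
Qed.

Lemma SN_gfun_convergent_bound (nu : nat) (x A : nat -> R) (al e c kap aK : R) (p : Z)
  (q b : nat) (V : nat -> R) :
  (1 <= q)%nat -> Z.gcd p (Z.of_nat q) = 1%Z -> INR q * al = IZR p + e ->
  RInt (gfun nu x A) 0 1 = 0 ->
  (forall n j, (1 <= n <= b * q)%nat -> (j < q)%nat ->
     gfun nu x A (INR j / INR q + INR n * e / INR q) = V j + sum1 A nu * (INR n * e / INR q)) ->
  0 < aK -> Rabs e * INR q * aK < 1 -> INR b <= c * aK -> c <= kap -> 1 / aK <= kap ->
  Rabs (SN (gfun nu x A) al (b * q) - INR b * sum0 V q) <= Rabs (sum1 A nu) * INR b * kap.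
Proof.
  intros Hq Hpq He Hint HV HaK Hbound Hb Hck Hkap.
  rewrite (SN_gfun_convergent nu x A al e p q b V) by assumption.
  replace (INR b * sum0 V q + sum1 A nu * e / INR q * (INR (b * q) * (INR (b * q) + 1) / 2)
           - INR b * sum0 V q)
    with (sum1 A nu * e / INR q * (INR b * INR q * (INR b * INR q + 1) / 2))
    by (rewrite mult_INR; ring).
  apply (drift_bound _ _ _ _ aK c); auto.
  - apply (le_INR 1); assumption.
  - apply pos_INR.
Qed.

Definition orbit_mean (nu : nat) (x A : nat -> R) (s : nat) : R :=
  - sum1 A nu / 2 + INR s * step_integral nu x A.

Section Convergents.

Variables (nu : nat) (x A : nat -> R) (L : nat) (a : nat -> nat).
Hypothesis Hgrid : on_grid nu x L a.

Variable al : R.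
Hypotheses (al_01 : 0 < al < 1) (al_irr : ~ is_rational al).
Variables (s : nat) (c kap : R).
Hypotheses (Hs : (s <= 1)%nat) (Hc : 0 < c) (HcL : c <= 1 / INR L) (Hck : c <= kap).

Lemma SN_even_convergent (k m b : nat) :
  Nat.Even k -> (Z.to_nat (cf_q al k) + s = m * L)%nat ->
  1 / IZR (cf_a al (S k)) <= kap -> INR b <= c * IZR (cf_a al (S k)) ->
  Rabs (SN (gfun nu x A) al (b * Z.to_nat (cf_q al k)) - INR b * orbit_mean nu x A s)
    <= Rabs (sum1 A nu) * INR b * kap.
Proof.
  intros [t ->] Hm Hkap Hb.
  destruct (cf_convergent al al_01 al_irr (2 * t)) as [p [Hq [Hpq [He Hbound]]]].
  rewrite pow_1_even, Rmult_1_l in He.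
  pose proof (cf_err_pos al al_01 al_irr (S (2 * t))) as He0.
  destruct (cf_a_bounds al al_01 al_irr (2 * t)) as [Ha1 _]. apply IZR_le in Ha1.
  pose proof Hgrid as [HL _].
  set (q := Z.to_nat (cf_q al (2 * t))) in *.
  set (e := cf_err al (S (2 * t))) in *.
  unfold orbit_mean. rewrite <- (sum0_right_value nu x A L a Hgrid m q s) by auto.
  apply (SN_gfun_convergent_bound nu x A al e c kap (IZR (cf_a al (S (2 * t)))) p);
    try lra; try rewrite Rabs_pos_eq by lra; auto.
  - apply (RInt_gfun_on_grid nu x A L a Hgrid).
  - intros n j Hn Hj. apply (gfun_right nu x A L a Hgrid m q s j); auto.
    assert (Hd : Rabs (INR n * e / INR q) < 1 / (INR q * INR L)).
    { apply (perturbation_small n b q L e c (IZR (cf_a al (S (2 * t))))); try lia; auto.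
      rewrite Rabs_pos_eq; lra. }
    assert (Hd0 : 0 <= INR n * e / INR q).
    { apply Rmult_le_pos; [apply Rmult_le_pos; [apply pos_INR | lra]|].
      apply Rlt_le, Rinv_0_lt_compat, lt_0_INR. lia. }
    rewrite Rabs_pos_eq in Hd by exact Hd0. lra.
Qed.

Lemma SN_odd_convergent (k m b : nat) :
  Nat.Odd k -> (Z.to_nat (cf_q al k) = m * L + s)%nat ->
  1 / IZR (cf_a al (S k)) <= kap -> INR b <= c * IZR (cf_a al (S k)) ->
  Rabs (SN (gfun nu x A) al (b * Z.to_nat (cf_q al k)) - INR b * - orbit_mean nu x A s)
    <= Rabs (sum1 A nu) * INR b * kap.
Proof.
  intros [t ->] Hm Hkap Hb. rewrite Nat.add_1_r in *.
  destruct (cf_convergent al al_01 al_irr (S (2 * t))) as [p [Hq [Hpq [He Hbound]]]].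
  rewrite pow_1_odd in He.
  pose proof (cf_err_pos al al_01 al_irr (S (S (2 * t)))) as He0.
  destruct (cf_a_bounds al al_01 al_irr (S (2 * t))) as [Ha1 _]. apply IZR_le in Ha1.
  pose proof Hgrid as [HL _].
  set (q := Z.to_nat (cf_q al (S (2 * t)))) in *.
  set (e := cf_err al (S (S (2 * t)))) in *.
  pose proof (sum0_left_value nu x A L a Hgrid m q s Hq Hm Hs) as Hsum.
  replace (INR b * - orbit_mean nu x A s) with (INR b * sum0 (left_value nu x A a m q) q)
    by (rewrite Hsum; unfold orbit_mean; field).
  apply (SN_gfun_convergent_bound nu x A al (- e) c kap (IZR (cf_a al (S (S (2 * t))))) p);
    try lra; try rewrite Rabs_Ropp, Rabs_pos_eq by lra; auto.
  - apply (RInt_gfun_on_grid nu x A L a Hgrid).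
  - intros n j Hn Hj. apply (gfun_left nu x A L a Hgrid m q s j); auto.
    assert (Hd : Rabs (INR n * - e / INR q) < 1 / (INR q * INR L)).
    { apply (perturbation_small n b q L (- e) c (IZR (cf_a al (S (S (2 * t))))));
        try lia; auto.
      rewrite Rabs_Ropp, Rabs_pos_eq; lra. }
    assert (Hd0 : INR n * - e / INR q < 0).
    { assert (0 < INR n) by (apply lt_0_INR; lia). assert (0 < INR q) by (apply lt_0_INR; lia).
      unfold Rdiv. apply Rmult_neg_pos; [nra | apply Rinv_0_lt_compat; lra]. }
    rewrite Rabs_left in Hd by exact Hd0. lra.
Qed.

End Convergents.

Lemma Z_mod_eq_exists (Q r : Z) (L : nat) : (1 <= L)%nat ->
  (Q mod Z.of_nat L = r mod Z.of_nat L)%Z -> exists m : Z, Q = (m * Z.of_nat L + r)%Z.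
Proof.
  intros HL H. exists ((Q - r) / Z.of_nat L)%Z.
  assert (Hm : ((Q - r) mod Z.of_nat L = 0)%Z)
    by (rewrite Zminus_mod, H, Z.sub_diag; reflexivity).
  pose proof (Z.div_mod (Q - r) (Z.of_nat L) ltac:(lia)). lia.
Qed.

Lemma odd_mod2_pred_even (K : nat) : (Z.of_nat K mod 2 = 1 mod 2)%Z -> Nat.Even (K - 1).
Proof.
  intros H. change (1 mod 2)%Z with 1%Z in H.
  pose proof (Z.div_mod (Z.of_nat K) 2 ltac:(lia)).
  exists (Z.to_nat (Z.of_nat K / 2)). lia.
Qed.

Lemma even_mod2_pred_odd (K : nat) : (1 <= K)%nat ->
  (Z.of_nat K mod 2 = 0 mod 2)%Z -> Nat.Odd (K - 1).
Proof.
  intros HK H. change (0 mod 2)%Z with 0%Z in H.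
  pose proof (Z.div_mod (Z.of_nat K) 2 ltac:(lia)).
  exists (Z.to_nat (Z.of_nat K / 2) - 1)%nat. lia.
Qed.

Lemma inv_le_of_inv_le (u v : R) : 0 < u -> 1 / u <= v -> 1 / v <= u.
Proof.
  intros Hu H. assert (Hv : 0 < v) by (assert (0 < 1 / u) by (apply Rdiv_lt_0_compat; lra); lra).
  apply (Rmult_le_reg_r v); [exact Hv|]. apply (Rmult_le_compat_r u) in H; [|lra].
  replace (1 / u * u) with 1 in H by (field; lra). replace (1 / v * v) with 1 by (field; lra). lra.
Qed.

Lemma SN_parity_bounds (nu : nat) (x A : nat -> R) (L : nat) (a : nat -> nat) (s : nat)
  (c kap al : R) (K b : nat) :
  on_grid nu x L a -> (s <= 1)%nat -> 0 < c -> c <= 1 / INR L -> c <= kap ->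
  0 < al < 1 -> ~ is_rational al -> (1 <= K)%nat ->
  1 / kap <= IZR (cf_a al K) -> INR b <= c * IZR (cf_a al K) ->
  ((Z.of_nat K mod 2 = 1 mod 2)%Z /\
   (cf_q al (K - 1) mod Z.of_nat L = (- Z.of_nat s) mod Z.of_nat L)%Z ->
   Rabs (SN (gfun nu x A) al (b * Z.to_nat (cf_q al (K - 1))) - INR b * orbit_mean nu x A s)
     <= Rabs (sum1 A nu) * INR b * kap) /\
  ((Z.of_nat K mod 2 = 0 mod 2)%Z /\
   (cf_q al (K - 1) mod Z.of_nat L = Z.of_nat s mod Z.of_nat L)%Z ->
   Rabs (SN (gfun nu x A) al (b * Z.to_nat (cf_q al (K - 1))) - INR b * - orbit_mean nu x A s)
     <= Rabs (sum1 A nu) * INR b * kap).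
Proof.
  intros Hgrid Hs Hc HcL Hck Hal Hirr HK HaK Hb.
  pose proof Hgrid as [HL _]. pose proof (cf_q_ge1 al Hal Hirr (K - 1)) as Hq.
  replace K with (S (K - 1)) in HaK, Hb by lia.
  apply inv_le_of_inv_le in HaK; [|lra].
  split; intros [HKpar Hcong].
  - apply odd_mod2_pred_even in HKpar.
    destruct (Z_mod_eq_exists _ _ L HL Hcong) as [m Hm].
    apply (SN_even_convergent nu x A L a Hgrid al Hal Hirr s c kap Hs Hc HcL Hck
             (K - 1) (Z.to_nat m)); auto. nia.
  - apply (even_mod2_pred_odd K HK) in HKpar.
    destruct (Z_mod_eq_exists _ _ L HL Hcong) as [m Hm].
    apply (SN_odd_convergent nu x A L a Hgrid al Hal Hirr s c kap Hs Hc HcL Hck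
             (K - 1) (Z.to_nat m)); auto. nia.
Qed.

Lemma orbit_mean_nonzero (nu : nat) (x A : nat -> R) :
  sum1 A nu <> 0 \/ step_integral nu x A <> 0 ->
  exists s, (s <= 1)%nat /\ orbit_mean nu x A s <> 0.
Proof.
  unfold orbit_mean. intros Hnd.
  destruct (Req_dec (- sum1 A nu / 2 + step_integral nu x A) 0) as [E | E].
  - exists 0%nat. split; [lia|]. simpl. destruct Hnd; lra.
  - exists 1%nat. split; [lia|]. simpl. lra.
Qed.

Lemma exists_kappa (S t : R) : t <> 0 ->
  exists kap, 0 < kap /\ Rabs S * kap <= Rabs t / 2.
Proof.
  intros Ht. pose proof (Rabs_pos_lt t Ht). pose proof (Rabs_pos S).
  exists (Rabs t / (2 * (Rabs S + 1))). split; [apply Rdiv_lt_0_compat; lra|].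
  apply (Rmult_le_reg_r (2 * (Rabs S + 1))); [lra|].
  replace (Rabs S * (Rabs t / (2 * (Rabs S + 1))) * (2 * (Rabs S + 1)))
    with (Rabs S * Rabs t) by (field; lra).
  nra.
Qed.

Lemma ge_of_close (T t B c' S kap D : R) :
  0 <= B -> 0 <= D -> 0 < t -> Rabs t = 2 * c' -> Rabs S * kap <= c' ->
  Rabs (T - B * t) <= Rabs S * B * kap -> T >= B * c' - D.
Proof.
  intros HB HD Ht Hc' Hkap Hclose. apply Rabs_le_between in Hclose.
  rewrite Rabs_pos_eq in Hc' by lra. subst t.
  assert (Rabs S * B * kap <= B * c') by nra. lra.
Qed.

Lemma le_of_close (T t B c' S kap D : R) :
  0 <= B -> 0 <= D -> t < 0 -> Rabs t = 2 * c' -> Rabs S * kap <= c' ->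
  Rabs (T - B * t) <= Rabs S * B * kap -> T <= - (B * c') + D.
Proof.
  intros HB HD Ht Hc' Hkap Hclose. apply Rabs_le_between in Hclose.
  rewrite Rabs_left in Hc' by lra. replace t with (- (2 * c')) in * by lra.
  assert (Rabs S * B * kap <= B * c') by nra. lra.
Qed.

Theorem lemma3p8 (f : R -> R) (nu : nat) (x A : nat -> R)
  (Hf : piecewise_smooth_rational f nu x)
  (HA : jumps f nu x A)
  (Hjump : exists i, (1 <= i <= nu)%nat /\ A i <> 0)
  (Hnd : sum1 A nu <> 0 \/
         sum1 (fun i => cc A i * (xx x i - xx x (i - 1))) nu <> 0) :
  exists c c' : R, 0 < c /\ 0 < c' /\
  exists mu1 beta1 gamma1 delta1 mu2 beta2 gamma2 delta2 : Z,
    (0 < beta1)%Z /\ (0 < delta1)%Z /\ (0 < beta2)%Z /\ (0 < delta2)%Z /\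
  exists D : R, 0 < D /\
  forall alpha : R, 0 < alpha < 1 -> ~ is_rational alpha ->
  exists (K0 : nat) (a0 : R),
  forall K : nat, (K0 <= K)%nat -> a0 <= IZR (cf_a alpha K) ->
    (( (Z.of_nat K mod beta1 = mu1 mod beta1)%Z /\
       (cf_q alpha (K - 1) mod delta1 = gamma1 mod delta1)%Z ) ->
     forall b : nat, INR b <= c * IZR (cf_a alpha K) ->
       SN (gfun nu x A) alpha (b * Z.to_nat (cf_q alpha (K - 1)))
         >= INR b * c' - D * sum1 (fun i => IZR (cf_a alpha i)) (K - 1)) /\
    (( (Z.of_nat K mod beta2 = mu2 mod beta2)%Z /\
       (cf_q alpha (K - 1) mod delta2 = gamma2 mod delta2)%Z ) ->
     forall b : nat, INR b <= c * IZR (cf_a alpha K) ->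
       SN (gfun nu x A) alpha (b * Z.to_nat (cf_q alpha (K - 1)))
         <= - (INR b * c') + D * sum1 (fun i => IZR (cf_a alpha i)) (K - 1)).
Proof.
  (* [gfun] is built from [x] and [A] alone. *)
  destruct Hf as (_ & _ & Hrat & H0 & H1 & Hinc & _).
  destruct (on_grid_exists nu x Hrat H0 H1 Hinc) as (L & a & Hgrid).
  destruct (orbit_mean_nonzero nu x A Hnd) as (s & Hs & Htau).
  set (tau := orbit_mean nu x A s) in *.
  destruct (exists_kappa (sum1 A nu) tau Htau) as (kap & Hkap & HSk).
  pose proof Hgrid as [HL _].
  set (c := Rmin (1 / INR L) kap).
  assert (Hc : 0 < c)
    by (apply Rmin_pos; [apply Rdiv_lt_0_compat; [lra | apply lt_0_INR; lia] | exact Hkap]).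
  pose proof (fun al K b => SN_parity_bounds nu x A L a s c kap al K b Hgrid Hs Hc
                              (Rmin_l _ _) (Rmin_r _ _)) as Hpar.
  exists c, (Rabs tau / 2). split; [exact Hc|]. split; [apply Rabs_pos_lt in Htau; lra|].
  assert (Hrel : Rabs (- tau) = 2 * (Rabs tau / 2)) by (rewrite Rabs_Ropp; field).
  assert (Hrel' : Rabs tau = 2 * (Rabs tau / 2)) by field.
  (* The bounds hold without the D term; D = 1 is arbitrary. *)
  destruct (Rdichotomy _ _ Htau) as [Hneg | Hpos];
    [ exists 0%Z, 2%Z, (Z.of_nat s), (Z.of_nat L), 1%Z, 2%Z, (- Z.of_nat s)%Z, (Z.of_nat L)
    | exists 1%Z, 2%Z, (- Z.of_nat s)%Z, (Z.of_nat L), 0%Z, 2%Z, (Z.of_nat s), (Z.of_nat L) ];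
    do 4 (split; [lia|]); exists 1; (split; [lra|]); intros al Hal Hirr; exists 1%nat, (1 / kap);
    intros K HK HaK; pose proof (sum_cf_a_nonneg al (K - 1) Hal Hirr);
    split; intros Hcond b Hb; destruct (Hpar al K b Hal Hirr HK HaK Hb) as [Hodd Heven].
  - apply (ge_of_close _ (- tau) _ _ (sum1 A nu) kap); auto; [apply pos_INR | lra | lra].
  - apply (le_of_close _ tau _ _ (sum1 A nu) kap); auto; [apply pos_INR | lra].
  - apply (ge_of_close _ tau _ _ (sum1 A nu) kap); auto; [apply pos_INR | lra].
  - apply (le_of_close _ (- tau) _ _ (sum1 A nu) kap); auto; [apply pos_INR | lra | lra].
Qed.
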